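(* Let $n\geq1$ and $\mathcal{P},\mathcal{Q}\in eNNC_{2n}$. Then $\langle\mathcal{P}\rangle=\langle\mathcal{Q}\rangle$ as subcategories of $\overline{\mathcal{C}}_n$ if and only if $\mathcal{P}=\mathcal{Q}$ up to relabelling of blocks.
   Context: Let $k$ be a field, $S$ the unit circle with anticlockwise orientation. Fix a discrete infinite subset $\mathscr{M}\subset S$ such that every limit point of $\mathscr{M}$ is a limit of both an increasing and a decreasing sequence of $\mathscr{M}$ in the cyclic order, with exactly $n$ such limit points (accumulation points) $a_1,\dots,a_n$ in cyclic order (indices mod $n$, $a_0=a_n$); put $\overline{\mathscr{M}}=\mathscr{M}\cup\{a_1,\dots,a_n\}$, and let $(a_i,a_{i+1})$ denote the points of $\mathscr{M}$ strictly between $a_i$ and $a_{i+1}$. Each $x\in\mathscr{M}$ has a cyclic predecessor $x^-$ and successor $x^+$ in $\mathscr{M}$; for accumulation points $a^\pm=a$. An arc of $\overline{\mathscr{M}}$ is an unordered pair $\{x_1,x_2\}\subset\overline{\mathscr{M}}$ with $x_2\ne x_1,x_1^-,x_1^+$; arcs cross if their endpoints strictly alternate cyclically; $\{x_1,x_2\}[1]=\{x_1^-,x_2^-\}$. The Paquette–Yıldırım category $\overline{\mathcal{C}}_n$ is a Hom-finite, $k$-linear, Krull–Schmidt triangulated category with suspension $[1]$ whose indecomposables $X$ correspond bijectively to arcs $\ell_X$ of $\overline{\mathscr{M}}$, with $\ell_{X[1]}=\ell_X[1]$, and $\mathrm{Hom}(X,Y)\cong k$ if $\ell_X$ and $\ell_Y[-1]$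 cross, or both have an endpoint at a common accumulation point with $\ell_Y[-1]$ an anticlockwise rotation of $\ell_X$ about it; $0$ otherwise. A non-exhaustive non-crossing partition of $[m]=\{1,\dots,m\}$ is a collection of pairwise disjoint nonempty subsets (blocks) of $[m]$, not necessarily covering $[m]$, such that whenever $i<k<j<l$ with $i,j$ in a block $B$ and $k,l$ in a block $B'$, $B=B'$. $eNNC_{2n}$ is the set of such partitions of $[2n]$ containing no block $\{i\}$ with $i$ even. For $\mathcal{P}\in eNNC_{2n}$, $\langle\mathcal{P}\rangle\subseteq\overline{\mathcal{C}}_n$ is the additive closure (closed under sums and summands) of indecomposables $X$ with $\ell_X=\{x,y\}$ such that for some block $B\in\mathcal{P}$, $x,y\in\bigcup_{p\in B,\,p\text{ odd}}(a_{(p-1)/2},a_{(p+1)/2})\cup\bigcup_{p\in B,\,p\text{ even}}\{a_{p/2}\}$. *)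

From mathcomp Require Import all_boot all_order all_algebra.
Set Implicit Arguments. Unset Strict Implicit. Unset Printing Implicit Defensive.
Import GRing.Theory.
Local Open Scope ring_scope.

(* Points of \overline{M}, up to cyclic-order isomorphism.
   [inl i]        (i : 'I_n) is the accumulation point a_{i+1};
   [inr (i, z)]   is the z-th point of M in the segment (a_i, a_{i+1})
                  (with a_0 = a_n); consecutive integers are cyclic
                  successors/predecessors in M.
   Cyclic order: a_n, (a_n,a_1)=seg 0, a_1, seg 1, a_2, ..., seg (n-1), a_n. *)
Definition pt (n : nat) := ('I_n + ('I_n * int))%type.

Definition acc {n} (i : 'I_n) : pt n := inl i.
Definition segpt {n} (i : 'I_n) (z : int) : pt n := inr (i, z).

Definition succ {n} (x : pt n) : pt n :=
  match x with inl i => inl i | inr (i, z) => inr (i, z + 1) end.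
Definition pred_pt {n} (x : pt n) : pt n :=
  match x with inl i => inl i | inr (i, z) => inr (i, z - 1) end.

Definition is_arc {n} (x y : pt n) : bool :=
  [&& y != x, y != pred_pt x & y != succ x].

(* label in [2n] = {1,...,2n} of the region containing x, as a nat:
   label 2i+1 (odd) <-> segment (a_i, a_{i+1}); label 2i+2 (even) <-> a_{i+1}.
   Elements k : 'I_(2*n) of blocks stand for the labels k+1. *)
Definition label {n} (x : pt n) : nat :=
  match x with inl i => (2 * i + 2)%N | inr (i, _) => (2 * i + 1)%N end.

Definition is_eNNC (n : nat) (P : {set {set 'I_(2 * n)}}) : Prop :=
  [/\ (forall B, B \in P -> B != set0),
      (forall B B', B \in P -> B' \in P -> B != B' -> [disjoint B & B']),
      (forall B B' (i k j l : 'I_(2 * n)), B \in P -> B' \in P ->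
          (i < k)%N -> (k < j)%N -> (j < l)%N ->
          i \in B -> j \in B -> k \in B' -> l \in B' -> B = B')
    & (forall k : 'I_(2 * n), [set k] \in P -> odd k.+1)].

Definition in_regions {n} (B : {set 'I_(2 * n)}) (x : pt n) : bool :=
  [exists k in B, k.+1 == label x].

(* The indecomposables of <P>, as the set of arcs {x,y} with x,y in the
   regions of a single block.  (The relation is symmetric, i.e. on
   unordered pairs.) *)
Definition subcat {n} (P : {set {set 'I_(2 * n)}}) : rel (pt n) :=
  fun x y => is_arc x y && [exists B in P, in_regions B x && in_regions B y].

From mathcomp Require Import all_boot all_order all_algebra.
From mathcomp Require Import zify.
Set Implicit Arguments. Unset Strict Implicit. Unset Printing Implicit Defensive.

(* A family of nonempty pairwise disjoint sets is determined by the relation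
   "lie in a common block", and <P> determines that relation for P: two
   distinct labels are joined by an arc between points of their regions, a
   segment label by an arc inside its own (infinite) segment.  Only an
   accumulation point a carries no arc inside its region; whether a is
   covered by P is still visible, because its block is not the singleton {a}
   and hence also contains another label. *)

Section SameBlock.
Variable T : finType.
Implicit Types (P Q : {set {set T}}) (x y : T).

Definition same_block P : rel T :=
  fun x y => [exists B in P, (x \in B) && (y \in B)].

Lemma same_blockP P x y :
  reflect (exists2 B, B \in P & (x \in B) && (y \in B)) (same_block P x y).
Proof. exact: exists_inP. Qed.

Lemma same_blockE P x y :
  trivIset P -> same_block P x y = (x \in cover P) && (y \in pblock P x).
Proof.
move=> tiP; apply/same_blockP/andP => [[B PB /andP[Bx By]] | [Px Pxy]].
  by rewrite (def_pblock tiP PB Bx) -mem_pblock (def_pblock tiP PB Bx).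
by exists (pblock P x); rewrite ?pblock_mem // mem_pblock Px.
Qed.

Lemma same_block_refl P x : same_block P x x = (x \in cover P).
Proof.
apply/same_blockP/bigcupP => [[B PB /andP[Bx _]] | [B PB Bx]]; exists B => //.
by rewrite Bx.
Qed.

Lemma equivalence_partition_same_block P :
  partition P (cover P) -> equivalence_partition (same_block P) (cover P) = P.
Proof.
move=> partP; have /and3P[_ tiP _] := partP.
rewrite -[RHS](equivalence_partition_pblock partP).
apply: eq_in_imset => x Px; apply/setP => y.
by rewrite !inE same_blockE // Px.
Qed.

Lemma same_block_inj P Q :
  partition P (cover P) -> partition Q (cover Q) ->
  same_block P =2 same_block Q -> P = Q.
Proof.
move=> partP partQ eqPQ.
have eq_cover : cover P = cover Q.
  by apply/setP => x; rewrite -!same_block_refl eqPQ.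
rewrite -(equivalence_partition_same_block partP).
rewrite -(equivalence_partition_same_block partQ) -eq_cover.
by apply: eq_in_imset => x _; apply/setP => y; rewrite !inE eqPQ.
Qed.

End SameBlock.

Lemma eNNC_partition n (P : {set {set 'I_(2 * n)}}) :
  is_eNNC P -> partition P (cover P).
Proof.
case=> neq0 disjP _ _; apply/and3P; split=> //.
  by apply/trivIsetP => B B' PB PB'; apply: disjP.
by apply/negP => /neq0; rewrite eqxx.
Qed.

Lemma eNNC_same_block_refl_odd n (P : {set {set 'I_(2 * n)}}) (k : 'I_(2 * n)) :
  is_eNNC P -> odd k ->
  same_block P k k = [exists j, (j != k) && same_block P k j].
Proof.
move=> hP odd_k; apply/idP/existsP => [Pk | [j /andP[_ /same_blockP[B PB]]]].
  have [_ _ _ /(_ k) no_singleton] := hP.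
  have tiP := partition_trivIset (eNNC_partition hP).
  rewrite same_block_refl in Pk.
  have : pblock P k != [set k].
    by apply: contraTneq odd_k => eq_k; apply: no_singleton; rewrite -eq_k pblock_mem.
  rewrite eqEsubset sub1set mem_pblock Pk andbT => /subsetPn[j Pkj].
  by rewrite in_set1 => ne_jk; exists j; rewrite ne_jk same_blockE ?Pk.
by case/andP => Bk _; apply/same_blockP; exists B; rewrite ?Bk.
Qed.

Lemma half_lt n (k : 'I_(2 * n)) : (k./2 < n)%N.
Proof. by rewrite ltn_half_double -mul2n. Qed.

(* [k] stands for the label [k.+1], so odd [k] is the accumulation point
   a_{k./2 + 1} and even [k] the segment (a_{k./2}, a_{k./2 + 1}). *)
Definition region_pt n (k : 'I_(2 * n)) (z : int) : pt n :=
  let i := Ordinal (half_lt k) in if odd k then acc i else segpt i z.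

Lemma label_region_pt n (k : 'I_(2 * n)) z : label (region_pt k z) = k.+1.
Proof.
rewrite /region_pt /label /=; have := odd_double_half k.
by case: (odd k) => /=; rewrite -mul2n; lia.
Qed.

Lemma label_succ n (x : pt n) : label (succ x) = label x.
Proof. by case: x => [|[]]. Qed.

Lemma label_pred n (x : pt n) : label (pred_pt x) = label x.
Proof. by case: x => [|[]]. Qed.

Lemma is_arc_label n (x y : pt n) : label x != label y -> is_arc x y.
Proof.
move=> ne_xy; apply/and3P; split; apply: contraNneq ne_xy => ->.
- by [].
- by rewrite label_pred.
- by rewrite label_succ.
Qed.

Lemma is_arc_segment n (k : 'I_(2 * n)) :
  ~~ odd k -> is_arc (region_pt k 0) (region_pt k 2).
Proof.
move=> /negbTE even_k; rewrite /is_arc /region_pt /= even_k.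
by apply/and3P; split; apply/eqP => -[] /eqP.
Qed.

Lemma in_regions_region_pt n (B : {set 'I_(2 * n)}) k z :
  in_regions B (region_pt k z) = (k \in B).
Proof.
rewrite /in_regions label_region_pt.
apply/existsP/idP => [[k' /andP[Bk' /eqP[/val_inj <-]]] // | Bk].
by exists k; rewrite Bk eqxx.
Qed.

Lemma subcat_region_pt n (P : {set {set 'I_(2 * n)}}) k k' z z' :
  subcat P (region_pt k z) (region_pt k' z') =
  is_arc (region_pt k z) (region_pt k' z') && same_block P k k'.
Proof. by congr andb; apply: eq_existsb => B; rewrite !in_regions_region_pt. Qed.

Lemma same_block_of_subcat n (P Q : {set {set 'I_(2 * n)}}) :
  is_eNNC P -> is_eNNC Q -> subcat P =2 subcat Q -> same_block P =2 same_block Q.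
Proof.
move=> hP hQ eqPQ.
have eq_ne k k' : k != k' -> same_block P k k' = same_block Q k k'.
  move=> ne_kk'; have := eqPQ (region_pt k 0) (region_pt k' 0).
  by rewrite !subcat_region_pt is_arc_label // !label_region_pt eqSS.
move=> k k'; have [<- | ] := eqVneq k k'; last exact: eq_ne.
have [odd_k | even_k] := boolP (odd k).
  rewrite !eNNC_same_block_refl_odd //; apply: eq_existsb => j.
  by have [// | ne_jk] := eqVneq j k; rewrite eq_ne // eq_sym.
by have := eqPQ (region_pt k 0) (region_pt k 2); rewrite !subcat_region_pt is_arc_segment.
Qed.

Theorem lemma4p7 (n : nat) (hn : (1 <= n)%N) (P Q : {set {set 'I_(2 * n)}}) :
  is_eNNC P -> is_eNNC Q ->
  (subcat P =2 subcat Q <-> P = Q).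
Proof.
move=> hP hQ; split=> [eqPQ | -> //].
apply: same_block_inj (eNNC_partition hP) (eNNC_partition hQ) _.
exact: same_block_of_subcat.
Qed.
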